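(* Let $\Gamma$ be a nonempty set and $\mathcal{S}$ a family of subsets of $\Gamma$ containing all singletons of $\Gamma$. For $s\in\mathcal{S}$ let $s^*\in J\mathcal{S}^*$ be the functional determined by $s^*(\phi)=\sum_{a\in s}\phi(a)$ for finitely supported $\phi$, and let $D=\{\sum_{i=1}^n\lambda_i s_i^*: n\in\mathbb{N},\ \lambda_i\in\mathbb{R},\ s_i\in\mathcal{S},\ s_1,\dots,s_n \text{ pairwise disjoint},\ \sum_{i=1}^n\lambda_i^2\le1\}$. Then the $w^*$-closure of $D$ contains all extreme points of the closed unit ball of $J\mathcal{S}^*$.
   Context: For a finitely supported function $\phi:\Gamma\to\mathbb{R}$, the James-$\mathcal{S}$ norm is $\|\phi\|=\sup\big(\sum_{i=1}^n(\sum_{a\in s_i}\phi(a))^2\big)^{1/2}$, the supremum over all finite families of pairwise disjoint elements $s_1,\dots,s_n$ of $\mathcal{S}$; $J\mathcal{S}$ is the completion of the finitely supported real functions on $\Gamma$ in this norm. One has $\|s^*\|\le1$ and $D$ lies in the unit ball of $J\mathcal{S}^*$. *)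

From HB Require Import structures.
From mathcomp Require Import all_boot all_order all_algebra.
From mathcomp Require Import all_classical all_reals all_analysis.
Set Implicit Arguments. Unset Strict Implicit. Unset Printing Implicit Defensive.
Import Order.TTheory GRing.Theory Num.Theory.
Import numFieldNormedType.Exports.
Local Open Scope classical_set_scope.
Local Open Scope ring_scope.

(* Functionals on JS are represented through their restriction to the dense
   subspace c00(Gamma) of finitely supported real functions. *)
Section JamesS.
Variables (R : realType) (Gamma : Type).

Definition fsfun : Type := {phi : Gamma -> R | finite_set [set a | phi a != 0]}.

Definition ssum (s : set Gamma) (phi : fsfun) : R :=
  \sum_(a \in (s : set {classic Gamma})) (proj1_sig phi) a.

Definition disj_family (S : set (set Gamma)) (n : nat) (s : 'I_n -> set Gamma) :=
  (forall i, S (s i)) /\ (forall i j, i != j -> s i `&` s j = set0).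

Definition JSnorm (S : set (set Gamma)) (phi : fsfun) : R :=
  Num.sqrt (sup [set x : R | exists n (s : 'I_n -> set Gamma),
     disj_family S s /\ x = \sum_(i < n) (ssum (s i) phi) ^+ 2]).

Definition lin_functional (f : fsfun -> R) :=
  forall (c : R) (phi psi chi : fsfun),
    (forall a, proj1_sig chi a = c * proj1_sig phi a + proj1_sig psi a) ->
    f chi = c * f phi + f psi.

Definition dual_ball (S : set (set Gamma)) : set (fsfun -> R) :=
  [set f | lin_functional f /\ forall phi, `|f phi| <= JSnorm S phi].

Definition extreme_point (B : set (fsfun -> R)) (f : fsfun -> R) :=
  B f /\ forall g h (t : R), B g -> B h -> 0 < t < 1 ->
    f = (fun phi => t * g phi + (1 - t) * h phi) -> g = h.

Definition sstar (s : set Gamma) : fsfun -> R := fun phi => ssum s phi.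

Definition Dset (S : set (set Gamma)) : set (fsfun -> R) :=
  [set f | exists n (lam : 'I_n -> R) (s : 'I_n -> set Gamma),
     [/\ disj_family S s, \sum_(i < n) lam i ^+ 2 <= 1 &
         f = (fun phi => \sum_(i < n) lam i * sstar (s i) phi)]].

Definition wstar_closure (A : set (fsfun -> R)) : set (fsfun -> R) :=
  @closure {ptws fsfun -> R} A.

End JamesS.

From HB Require Import structures.
From mathcomp Require Import all_boot all_order all_algebra.
From mathcomp Require Import all_classical all_reals all_analysis.
From mathcomp Require Import ring lra.
Set Implicit Arguments. Unset Strict Implicit. Unset Printing Implicit Defensive.
Import Order.TTheory GRing.Theory Num.Theory.
Import numFieldNormedType.Exports.
Local Open Scope classical_set_scope.
Local Open Scope ring_scope.

(* This is Milman's converse of the Krein-Milman theorem in the w*-topology.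
   The dual unit ball K is w*-compact (Tychonoff) and convex, it contains D,
   and D norms JS: for a disjoint family s_i the element of D with coefficients
   proportional to the block sums of phi takes the value (sum_i s_i*(phi)^2)^(1/2)
   at phi. Hence every w*-closed half-space containing D contains K.
   Given an extreme point f and a basic neighbourhood (finitely many test
   vectors, radius e), cover K by finitely many balls of radius e/2 and cut K
   into the compact convex pieces K /\ ball. Convex combinations of points of
   the pieces whose ball meets D form a compact convex set containing D; a
   least-squares argument in finitely many coordinates, together with the
   half-space property, shows that it contains K. Writing f as such a
   combination, extremality puts f in a single piece, within e/2 of the centre,
   and that centre is within e/2 of a point of D. *)

Lemma nearest_point_obtuse (R : realFieldType) (X : Type) (L : seq X) (f g0 g : X -> R) :
  (forall s, 0 < s <= 1 -> \sum_(x <- L) (g0 x - f x) ^+ 2 <=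
                           \sum_(x <- L) ((1 - s) * g0 x + s * g x - f x) ^+ 2) ->
  \sum_(x <- L) (f x - g0 x) * (g x - g0 x) <= 0.
Proof.
move=> g0_nearest; set A := \sum_(x <- L) _; rewrite leNgt; apply/negP => A_gt0.
set B := \sum_(x <- L) (g x - g0 x) ^+ 2.
have B_ge0 : 0 <= B by apply: sumr_ge0 => x _; exact: sqr_ge0.
have AB_gt0 : 0 < A + B by lra.
have expand s : \sum_(x <- L) ((1 - s) * g0 x + s * g x - f x) ^+ 2 =
    \sum_(x <- L) (g0 x - f x) ^+ 2 - s * (2 * A) + s * (s * B).
  rewrite /A /B !mulr_sumr -sumrB -big_split /=.
  by apply: eq_bigr => x _; ring.
pose s := A / (A + B).
have s_gt0 : 0 < s by exact: divr_gt0.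
have s_le1 : s <= 1 by rewrite ler_pdivrMr // mul1r lerDl.
have := g0_nearest s; rewrite s_gt0 s_le1 expand => /(_ isT) le_q.
have : s * (2 * A) <= s * (s * B) by lra.
rewrite ler_pM2l // => le2A.
have : s * B < A by rewrite /s mulrAC ltr_pdivrMr // ltr_pM2l // ltrDr.
lra.
Qed.

Lemma sum_sqr_le_sqr_sum (R : numDomainType) (I : finType) (b : I -> R) :
  (forall i, 0 <= b i) -> \sum_i b i ^+ 2 <= (\sum_i b i) ^+ 2.
Proof.
move=> b_ge0; rewrite [X in _ <= X]expr2 mulr_suml; apply: ler_sum => i _.
by rewrite expr2 ler_wpM2l // (bigD1 i) //= lerDl sumr_ge0.
Qed.

Lemma sum_mul_le1 (R : realFieldType) (I : finType) (lam w : I -> R) :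
  \sum_i lam i ^+ 2 <= 1 -> \sum_i w i ^+ 2 = 1 -> \sum_i lam i * w i <= 1.
Proof.
move=> lam_le1 w_eq1.
suff : 2 * \sum_i lam i * w i <= \sum_i lam i ^+ 2 + \sum_i w i ^+ 2 by lra.
rewrite mulr_sumr -big_split /=; apply: ler_sum => i _.
by have := sqr_ge0 (lam i - w i); rewrite sqrrB; lra.
Qed.

Lemma ler_norm_sum_mul_sqrt (R : rcfType) (I : finType) (lam a : I -> R) :
  \sum_i lam i ^+ 2 <= 1 -> `|\sum_i lam i * a i| <= Num.sqrt (\sum_i a i ^+ 2).
Proof.
move=> lam_le1; set t := Num.sqrt _.
have sq_ge0 : 0 <= \sum_i a i ^+ 2 by apply: sumr_ge0 => i _; exact: sqr_ge0.
have [t0|t_neq0] := eqVneq t 0.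
  have : \sum_i a i ^+ 2 == 0 by rewrite eq_le sq_ge0 andbT -sqrtr_eq0 -/t t0.
  rewrite psumr_eq0 => [/allP a0|i _]; last exact: sqr_ge0.
  rewrite big1 ?normr0 ?t0 // => i _.
  by move: (a0 i (mem_index_enum i)); rewrite sqrf_eq0 => /eqP ->; rewrite mulr0.
have t_gt0 : 0 < t by rewrite lt_def t_neq0 sqrtr_ge0.
pose w i := a i / t.
have w_eq1 : \sum_i w i ^+ 2 = 1.
  under eq_bigr do rewrite expr_div_n.
  rewrite -mulr_suml -[X in _ / X]/(t ^+ 2) sqr_sqrtr // divff //.
  by apply: contra_neq t_neq0 => sum0; rewrite /t sum0 sqrtr0.
have -> : \sum_i lam i * a i = t * \sum_i lam i * w i.
  by rewrite mulr_sumr; apply: eq_bigr => i _; rewrite /w; field.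
rewrite normrM gtr0_norm // -[X in _ <= X]mulr1 ler_pM2l // ler_norml.
rewrite sum_mul_le1 // andbT lerNl -sumrN.
under eq_bigr do rewrite -mulNr.
by apply: (sum_mul_le1 _ w_eq1); under eq_bigr do rewrite sqrrN.
Qed.

Lemma continuous_sumr (R : realType) (U : topologicalType) (I : Type) (r : seq I)
    (F : I -> U -> R) :
  (forall i, continuous (F i)) -> continuous (fun u => \sum_(i <- r) F i u).
Proof.
by move=> F_cont; apply: continuous_big => [|i _]; [exact: add_continuous|exact: F_cont].
Qed.

Section pointwise_topology.
Variables (R : realType) (T : Type).
Local Notation E := {ptws T -> R}.
Implicit Types (g h : E) (L : seq {classic T}).

Lemma ptws_eval_continuous (x : T) : continuous (fun g : E => g x).
Proof.
move=> g.
exact: (@pointwise_cvgP (discrete_topology {classic T}) R _ g _).1 (@cvg_id _ _) x.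
Qed.

Definition ptws_ball g L (e : R) : set E :=
  [set h | forall x, x \in L -> `|h x - g x| < e].

Definition ptws_cball g L (e : R) : set E :=
  [set h | forall x, x \in L -> `|h x - g x| <= e].

Lemma ptws_ball_nbhs g L e : 0 < e -> nbhs g (ptws_ball g L e).
Proof.
move=> e0; elim: L => [|x L IH]; first by apply: (@nearW _ (nbhs g)) => h x; rewrite in_nil.
have gx : \forall h \near g, `|g x - h x| < e.
  by move/cvgr_dist_lt: (@ptws_eval_continuous x g); apply.
suff -> : ptws_ball g (x :: L) e = [set h | `|g x - h x| < e] `&` ptws_ball g L e.
  exact: (@filterI _ (nbhs g) (@nbhs_filter E g) _ _ gx IH).
apply/seteqP; split => h.
  by move=> hL; split=> [/=|y yL]; [rewrite distrC|]; apply: hL; rewrite inE ?eqxx ?yL ?orbT.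
by move=> [hx hL] y; rewrite inE => /orP[/eqP->|/hL//]; rewrite distrC.
Qed.

Lemma nbhs_ptws_ball g W : nbhs g W -> exists L e, 0 < e /\ ptws_ball g L e `<=` W.
Proof.
pose G := filter_from [set p : seq {classic T} * R | 0 < p.2] (fun p => ptws_ball g p.1 p.2).
have FG : Filter G.
  apply: filter_from_filter; first by exists ([::], 1) => /=.
  move=> [L1 e1] [L2 e2] /= e10 e20; exists (L1 ++ L2, Num.min e1 e2).
    by rewrite /= lt_min e10 e20.
  move=> h /= hL; split => x Lx; apply: lt_le_trans (hL x _) _;
    by rewrite ?mem_cat ?Lx ?orbT ?ge_min ?lexx ?orbT.
have /(_ W) : G --> g.
  apply/(@pointwise_cvgP (discrete_topology {classic T}) R G g FG) => x V.
  move=> /nbhs_ballP [e e0 eV]; exists ([:: x], e) => //= h hx.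
  by apply: eV; rewrite /ball /= distrC; apply: hx; rewrite inE.
by move=> /[apply] -[[L e] /= e0 sW]; exists L, e.
Qed.

Lemma ptws_cball_closed g L e : closed (ptws_cball g L e).
Proof.
apply: (@closed_bigI _ _ [set` L]) => x _.
apply: (@preimage_closed _ _ (fun h : E => `|h x - g x|) _ _ (@closed_le _ e)) => h _.
exact: (cvg_norm (cvgB (@ptws_eval_continuous x h) (cvg_cst (g x)))).
Qed.

Lemma ptws_hausdorff : hausdorff_space E.
Proof. exact: (@hausdorff_product {classic T} (fun=> R) (fun=> @Rhausdorff R)). Qed.

(* [compact_cover] is stated for pointed spaces; any point will do. *)
HB.instance Definition _ := isPointed.Build E (fun _ => 0).

Lemma compact_ptws_ball_cover (K : set E) L e : compact K -> 0 < e ->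
  exists n (c : 'I_n -> E), (forall j, K (c j)) /\
    K `<=` \bigcup_j ptws_ball (c j) L e.
Proof.
rewrite compact_cover => cK e0.
have [F FK Kcov] := cK {classic E} K (fun g => interior (ptws_ball g L e))
  (fun g _ => @open_interior _ _) (fun g Kg => ex_intro2 _ _ g Kg (ptws_ball_nbhs g L e0)).
pose s := finmap.enum_fset F.
exists (size s), (fun j => nth (fun _ => 0) s j); split => [j|g /Kcov [c Fc /interior_subset cg]].
  by apply: set_mem; apply: FK; exact: mem_nth.
have cs : (index c s < size s)%N by rewrite index_mem.
by exists (Ordinal cs) => //=; rewrite nth_index.
Qed.

End pointwise_topology.

Section convex_combinations.
Variables (R : realType) (X : Type).
Implicit Types (K : set (X -> R)) (g h : X -> R).

Definition conv_closed K := forall (J : finType) (t : J -> R) (k : J -> X -> R),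
  (forall j, 0 <= t j) -> \sum_j t j = 1 -> (forall j, K (k j)) ->
  K (fun x => \sum_j t j * k j x).

Lemma conv_closed2 K g h s : conv_closed K -> K g -> K h -> 0 <= s <= 1 ->
  K (fun x => (1 - s) * g x + s * h x).
Proof.
move=> K_conv Kg Kh /andP[s_ge0 s_le1].
pose t b : R := if b then 1 - s else s.
have -> : (fun x => (1 - s) * g x + s * h x) =
    (fun x => \sum_b t b * (if b then g else h) x).
  by apply: funext => x; rewrite big_bool.
apply: K_conv => [[]|| []] //; rewrite ?big_bool /t ?subr_ge0 //=.
exact: subrK.
Qed.

Lemma conv_closedI K1 K2 : conv_closed K1 -> conv_closed K2 -> conv_closed (K1 `&` K2).
Proof.
by move=> K1_conv K2_conv J t k t_ge0 t_sum1 Kk; split;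
  [apply: K1_conv | apply: K2_conv] => // j; case: (Kk j).
Qed.

Lemma conv_closed_ptws_cball (c : {ptws X -> R}) L r : conv_closed (ptws_cball c L r).
Proof.
move=> J t k t_ge0 t_sum1 k_near x xL.
have -> : \sum_j t j * k j x - c x = \sum_j t j * (k j x - c x).
  by rewrite [RHS](eq_bigr _ (fun j _ => mulrBr _ _ _)) sumrB -mulr_suml t_sum1 mul1r.
apply: le_trans (ler_norm_sum _ _ _) _; rewrite -[r]mul1r -t_sum1 mulr_suml.
by apply: ler_sum => j _; rewrite normrM ger0_norm // ler_wpM2l // k_near.
Qed.

End convex_combinations.

Lemma extreme_point_conv_comb (R : realType) (Gamma : Type) (K : set (fsfun R Gamma -> R))
    (f : fsfun R Gamma -> R) (J : finType) (t : J -> R) (k : J -> fsfun R Gamma -> R) :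
  conv_closed K -> extreme_point K f ->
  (forall j, 0 <= t j) -> \sum_j t j = 1 -> (forall j, K (k j)) ->
  f = (fun x => \sum_j t j * k j x) -> forall m, 0 < t m -> f = k m.
Proof.
move=> K_conv [_ f_extreme] t_ge0 t_sum1 Kk f_eq m tm_gt0.
have t_split : \sum_j t j = t m + \sum_(j | j != m) t j by rewrite (bigD1 m).
have [tm1|tm_neq1] := eqVneq (t m) 1.
  have rest0 : \sum_(j | j != m) t j = 0 by move: t_split; rewrite t_sum1 tm1; lra.
  have t0 := psumr_eq0P (fun j _ => t_ge0 j) rest0.
  rewrite f_eq; apply: funext => x; rewrite (bigD1 m) //= big1 => [|j /t0->]; last by rewrite mul0r.
  by rewrite tm1 mul1r addr0.
have tm_lt1 : t m < 1 by rewrite lt_neqAle tm_neq1 -t_sum1 t_split lerDl sumr_ge0.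
pose w j := if j == m then 0 else t j / (1 - t m).
pose g x := \sum_j w j * k j x.
have Kg : K g.
  apply: K_conv => // [j|].
    by rewrite /w; case: eqP => // _; rewrite divr_ge0 // subr_ge0 (ltW tm_lt1).
  rewrite (bigD1 m) //= /w eqxx add0r (eq_bigr (fun j => t j / (1 - t m))) => [|j /negbTE -> //].
  have -> : \sum_(j | j != m) t j / (1 - t m) = (1 - t m) / (1 - t m).
    by rewrite -mulr_suml; congr (_ / _); lra.
  by rewrite divff // subr_eq0 eq_sym.
have f_mix : f = (fun x => t m * k m x + (1 - t m) * g x).
  rewrite f_eq; apply: funext => x; rewrite (bigD1 m) //= /g mulr_sumr [in RHS](bigD1 m) //=.
  rewrite /w eqxx mul0r mulr0 add0r; congr (_ + _); apply: eq_bigr => j /negbTE ->.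
  by rewrite mulrA mulrCA divff ?mulr1 // subr_eq0 eq_sym.
have kmg := f_extreme _ _ _ (Kk m) Kg (introT andP (conj tm_gt0 tm_lt1)) f_mix.
by rewrite f_mix -kmg; apply: funext => x; ring.
Qed.

Section milman.
Variables (R : realType) (Gamma : Type).
Local Notation X := (fsfun R Gamma).
Local Notation E := {ptws X -> R}.
Variables (K D : set E).
Hypothesis K_compact : compact K.
Hypothesis K_conv : conv_closed K.
Hypothesis D_sub_K : D `<=` K.
(* K lies in the closed convex hull of D, in dual form: a half-space cut out by
   finitely many coordinates that contains D contains K. *)
Hypothesis K_sub_hull : forall f (L : seq {classic X}) (a : X -> R) (beta : R), K f ->
  (forall d, D d -> \sum_(x <- L) a x * d x <= beta) -> \sum_(x <- L) a x * f x <= beta.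

Section finite_cover.
Variables (J : finType) (c : J -> E) (L : seq {classic X}) (r : R).
Hypotheses (c_in_K : forall j, K (c j)) (r_ge0 : 0 <= r).
Hypothesis K_covered : K `<=` \bigcup_j ptws_ball (c j) L r.

Definition near_D j := exists2 d, D d & ptws_ball (c j) L r d.

Definition piece j : set E := K `&` ptws_cball (c j) L r.

Definition weights : set {ptws J -> R} :=
  [set t | [/\ forall j, 0 <= t j, forall j, ~ near_D j -> t j = 0 & \sum_j t j = 1]].

Definition params : set ({ptws J -> R} * {ptws J -> E}) :=
  weights `*` [set k | forall j, piece j (k j)].

Definition mix (p : {ptws J -> R} * {ptws J -> E}) : E := fun x => \sum_j p.1 j * p.2 j x.

Lemma weights_compact : compact weights.
Proof.
have box := @tychonoff J (fun=> R) (fun=> `[0, 1]%classic) (fun=> @segment_compact R 0 1).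
apply: subclosed_compact box _; last first.
  move=> t [t_ge0 _ t_sum1] j; rewrite /= in_itv /= t_ge0 -t_sum1.
  by rewrite (bigD1 j) //= lerDl sumr_ge0.
have closed_pre (F : {ptws J -> R} -> R) A : continuous F -> closed A -> closed (F @^-1` A).
  by move=> /continuous_closedP; apply.
have -> : weights = \bigcap_j [set t | 0 <= t j] `&`
    \bigcap_(j in ~` near_D) [set t | t j = 0] `&` [set t | \sum_j t j = 1].
  apply/seteqP; split=> t.
    by case=> t_ge0 t_far t_sum1; split=> //; split=> [j _|j]; [exact: t_ge0|exact: t_far].
  by case=> -[t_ge0 t_far] t_sum1; split=> // j; apply: t_ge0.
have proj_cont j : continuous (fun t : {ptws J -> R} => t j) := @proj_continuous J (fun=> R) j.
apply: closedI; first apply: closedI.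
- by apply: closed_bigI => j _; exact: closed_pre (proj_cont j) (@closed_ge R 0).
- by apply: closed_bigI => j _; exact: closed_pre (proj_cont j) (@closed_eq R 0).
- exact: closed_pre (@continuous_sumr R _ J (index_enum J) _ proj_cont) (@closed_eq R 1).
Qed.

Lemma params_compact : compact params.
Proof.
apply: compact_setX; first exact: weights_compact.
apply: (@tychonoff J (fun=> E) piece) => j.
by apply: compact_closedI => //; exact: ptws_cball_closed.
Qed.

Lemma mix_coord_continuous x : continuous (fun p => mix p x).
Proof.
have weight_cont j : continuous (fun q : {ptws J -> R} * {ptws J -> E} => q.1 j).
  move=> q; apply: (@continuous_comp _ _ _ fst (fun t : {ptws J -> R} => t j)).
    exact: cvg_fst.
  exact: (@proj_continuous J (fun=> R) j).
have value_cont j : continuous (fun q : {ptws J -> R} * {ptws J -> E} => q.2 j x).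
  move=> q; apply: (@continuous_comp _ _ _ (fun q : _ * {ptws J -> E} => q.2 j) (fun g : E => g x)).
    apply: (@continuous_comp _ _ _ snd (fun k : {ptws J -> E} => k j)); first exact: cvg_snd.
    exact: (@proj_continuous J (fun=> E) j).
  exact: ptws_eval_continuous.
apply: (@continuous_sumr R _ J (index_enum J)
  (fun j (q : {ptws J -> R} * {ptws J -> E}) => q.1 j * q.2 j x)) => j q.
exact: continuousM (weight_cont j q) (value_cont j q).
Qed.

Lemma mix_continuous : continuous mix.
Proof.
move=> p; have mix_filter : Filter (mix @ nbhs p) by apply: fmap_filter; exact: nbhs_filter.
exact: (@pointwise_cvgP (discrete_topology {classic X}) R _ (mix p) mix_filter).2
  (fun x => @mix_coord_continuous x p).
Qed.

Lemma mix_params_closed : closed (mix @` params).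
Proof.
apply: compact_closed; first exact: ptws_hausdorff.
apply: continuous_compact; last exact: params_compact.
exact: continuous_subspaceT mix_continuous.
Qed.

Lemma mix_params_conv p0 p s : params p0 -> params p -> 0 <= s <= 1 ->
  exists2 q, params q & mix q = (fun x => (1 - s) * mix p0 x + s * mix p x).
Proof.
case: p0 p => [t0 k0] [t k] [[t0_ge0 t0_far t0_sum1] k0_piece] [[t_ge0 t_far t_sum1] k_piece].
move=> /andP[s_ge0 s_le1].
rewrite /= in t0_ge0 t0_far t0_sum1 k0_piece t_ge0 t_far t_sum1 k_piece.
pose u j := (1 - s) * t0 j + s * t j.
have u0_ge0 j : 0 <= (1 - s) * t0 j by rewrite mulr_ge0 ?subr_ge0.
have u1_ge0 j : 0 <= s * t j by rewrite mulr_ge0.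
pose l j : E := if u j == 0 then k0 j
  else (fun x => (1 - s * t j / u j) * k0 j x + s * t j / u j * k j x).
exists (u, l).
  split; first split => [j|j j_far|] /=.
  - exact: addr_ge0.
  - by rewrite /u t0_far // t_far // !mulr0 addr0.
  - by rewrite big_split /= -!mulr_sumr t0_sum1 t_sum1 !mulr1 subrK.
  move=> j /=; rewrite /l; case: eqP => [_|/eqP u_neq0]; first exact: k0_piece.
  have u_gt0 : 0 < u j by rewrite lt_def u_neq0 addr_ge0.
  apply: conv_closed2; [by apply: conv_closedI => //; exact: conv_closed_ptws_cball
                       |exact: k0_piece|exact: k_piece|].
  by rewrite divr_ge0 ?(ltW u_gt0) //= ler_pdivrMr // mul1r lerDr.
apply: funext => x; rewrite /mix /= !mulr_sumr -big_split; apply: eq_bigr => j _ /=.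
rewrite /l; case: eqP => [u0|/eqP u_neq0].
  rewrite u0 mul0r !mulrA.
  have [-> ->] : (1 - s) * t0 j = 0 /\ s * t j = 0.
    by move: (u0_ge0 j) (u1_ge0 j) u0; rewrite /u; lra.
  by rewrite !mul0r addr0.
by rewrite /u; field; rewrite -/(u j).
Qed.

Lemma D_sub_mix : D `<=` mix @` params.
Proof.
move=> d Dd; have [m _ d_near] := K_covered (D_sub_K Dd).
pose t : {ptws J -> R} := fun j => if j == m then 1 else 0.
pose k : {ptws J -> E} := fun j => if j == m then d else c j.
exists (t, k).
  split; first split => [j|j|] /=; rewrite /t.
  - by case: (j == m).
  - by case: eqP => // -> []; exists d.
  - by rewrite (bigD1 m) //= eqxx big1 ?addr0 // => j /negbTE ->.
  move=> j /=; rewrite /k; case: eqP => [->|_]; split.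
  - exact: D_sub_K.
  - by move=> x xL; apply: ltW; exact: d_near.
  - exact: c_in_K.
  - by move=> x _; rewrite subrr normr0.
apply: funext => x; rewrite /mix /= (bigD1 m) //= /t /k eqxx mul1r big1 ?addr0 //.
by move=> j /negbTE ->; rewrite mul0r.
Qed.

Lemma mix_interpolates f (L' : seq {classic X}) : K f ->
  exists2 p, params p & forall x, x \in L' -> mix p x = f x.
Proof.
move=> Kf.
have [d Dd] : exists d, D d.
  apply: contrapT => noD; suff : (0 : R) <= -1 by rewrite ler0N1.
  have := K_sub_hull (L := [::]) (a := fun=> 0) (beta := -1) Kf; rewrite !big_nil.
  by apply=> d Dd; case: noD; exists d.
have [p0 p0_params _] := D_sub_mix Dd.
(* p1 minimises the squared distance to f on L'; comparing with D through the
   obtuse-angle inequality and the hull property forces the residual to vanish. *)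
pose q p := \sum_(x <- L') (mix p x - f x) ^+ 2.
have q_cont : continuous q.
  apply: continuous_sumr => x p.
  have dist_cont : {for p, continuous (fun p => mix p x - f x)}.
    exact: (cvgB (@mix_coord_continuous x p) (cvg_cst (f x))).
  exact: (continuousM dist_cont dist_cont).
have [p1 /set_mem p1_params p1_min] :=
  compact_EVT_min (ex_intro _ p0 p0_params) params_compact (continuous_subspaceT q_cont).
pose a x := f x - mix p1 x.
pose beta := \sum_(x <- L') a x * mix p1 x.
have D_below d' : D d' -> \sum_(x <- L') a x * d' x <= beta.
  move=> /D_sub_mix [p p_params <-]; rewrite -subr_le0 /beta -sumrB.
  under eq_bigr do rewrite -mulrBr.
  apply: nearest_point_obtuse => s /andP[s_gt0 s_le1].
  have s01 : 0 <= s <= 1 by rewrite (ltW s_gt0) s_le1.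
  have [ps ps_params ps_mix] := mix_params_conv p1_params p_params s01.
  have := p1_min ps (mem_set ps_params).
  by rewrite /q ps_mix.
have := K_sub_hull Kf D_below.
have -> : \sum_(x <- L') a x * f x = beta + \sum_(x <- L') a x ^+ 2.
  by rewrite /beta -big_split /=; apply: eq_bigr => x _; rewrite /a; ring.
rewrite gerDl => sq_le0.
have sq0 : \sum_(x <- L') a x ^+ 2 == 0.
  by rewrite eq_le sq_le0 sumr_ge0 // => x _; exact: sqr_ge0.
exists p1 => // x xL'; move: sq0; rewrite psumr_eq0 => [|y _]; last exact: sqr_ge0.
by move=> /allP /(_ x xL'); rewrite sqrf_eq0 subr_eq0 => /eqP ->.
Qed.

Lemma K_sub_mix : K `<=` mix @` params.
Proof.
move=> f Kf; apply: mix_params_closed => B /nbhs_ptws_ball [L' [e [e_gt0 sB]]].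
have [p p_params p_f] := mix_interpolates L' Kf.
exists (mix p); split; first by exists p.
by apply: sB => x xL'; rewrite p_f // subrr normr0.
Qed.

End finite_cover.

Theorem extreme_point_sub_closure : extreme_point K `<=` closure D.
Proof.
move=> f f_extreme W /nbhs_ptws_ball [L [e [e_gt0 sW]]].
have r_gt0 : 0 < e / 2 by rewrite divr_gt0.
have [n [c [c_in_K K_covered]]] := compact_ptws_ball_cover L K_compact r_gt0.
have [[t k] [[t_ge0 t_far t_sum1] k_piece] f_mix] :=
  K_sub_mix c_in_K (ltW r_gt0) K_covered f_extreme.1.
rewrite /= in t_ge0 t_far t_sum1 k_piece.
have [m tm_gt0] : exists m, 0 < t m.
  have : \sum_j t j != 0 by rewrite t_sum1 oner_neq0.
  by rewrite psumr_neq0 // => /hasP[m _ /andP[_ tm_gt0]]; exists m.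
have f_km := extreme_point_conv_comb K_conv f_extreme t_ge0 t_sum1
  (fun j => (k_piece j).1) (esym f_mix) tm_gt0.
have [d Dd d_near] : near_D c L (e / 2) m.
  by apply: contrapT => /t_far tm0; rewrite tm0 ltxx in tm_gt0.
exists d; split => //; apply: sW => x xL.
have := d_near x xL; have := (k_piece m).2 x xL; rewrite -f_km => fc dc.
apply: le_lt_trans (ler_distD (c m x) _ _) _; rewrite (distrC (c m x)).
lra.
Qed.
End milman.

Section james_space.
Variables (R : realType) (Gamma : Type) (S : set (set Gamma)).
Local Notation X := (fsfun R Gamma).
Local Notation D := (@Dset R Gamma S).
Local Notation ball := (@dual_ball R Gamma S).
Implicit Types (phi psi : X) (s : set Gamma).

Lemma supp_seqP phi : exists2 r : seq {classic Gamma}, uniq r &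
  forall a : {classic Gamma}, sval phi a != 0 -> a \in r.
Proof.
have [r rE] := (finite_seqP [set a : {classic Gamma} | sval phi a != 0]).1 (proj2_sig phi).
exists (undup r) => [|a phia]; first exact: undup_uniq.
by rewrite mem_undup; have : [set` r] a by rewrite -rE.
Qed.

Lemma ssumE s phi (r : seq {classic Gamma}) : uniq r ->
  (forall a : {classic Gamma}, sval phi a != 0 -> a \in r) ->
  ssum s phi = \sum_(a <- r) (if a \in (s : set {classic Gamma}) then sval phi a else 0).
Proof.
move=> r_uniq supp_r; rewrite /ssum fsbig_mkcond (fsbigE r) //.
  by apply: eq_bigl => a; rewrite in_setT.
move=> a _ anr; rewrite /patch; case: ifP => // _.
by apply/eqP; apply: contraNT anr => /supp_r.
Qed.

Lemma sstar_lin_functional s : lin_functional (@sstar R Gamma s).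
Proof.
move=> c phi psi chi chiE; rewrite /sstar.
have [r1 _ phi_r1] := supp_seqP phi; have [r2 _ psi_r2] := supp_seqP psi.
pose r := undup (r1 ++ r2).
have r_uniq : uniq r := undup_uniq _.
have phi_r (a : {classic Gamma}) : sval phi a != 0 -> a \in r.
  by rewrite mem_undup mem_cat => /phi_r1 ->.
have psi_r (a : {classic Gamma}) : sval psi a != 0 -> a \in r.
  by rewrite mem_undup mem_cat orbC => /psi_r2 ->.
have chi_r (a : {classic Gamma}) : sval chi a != 0 -> a \in r.
  rewrite chiE; have [phia0|/phi_r//] := eqVneq (sval phi a) 0.
  by rewrite phia0 mulr0 add0r => /psi_r.
rewrite (ssumE s r_uniq phi_r) (ssumE s r_uniq psi_r) (ssumE s r_uniq chi_r).
rewrite mulr_sumr -big_split /=; apply: eq_bigr => a _.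
by case: ifP => _; rewrite ?chiE ?mulr0 ?addr0.
Qed.

Lemma sum_sqr_ssum_le phi (r : seq {classic Gamma}) n (s : 'I_n -> set Gamma) :
  uniq r -> (forall a : {classic Gamma}, sval phi a != 0 -> a \in r) ->
  (forall i j, i != j -> s i `&` s j = set0) ->
  \sum_i ssum (s i) phi ^+ 2 <= (\sum_(a <- r) `|sval phi a|) ^+ 2.
Proof.
move=> r_uniq supp_r s_disj.
pose b i := \sum_(a <- r) (if a \in (s i : set {classic Gamma}) then `|sval phi a| else 0).
have b_ge0 i : 0 <= b i by apply: sumr_ge0 => a _; case: ifP.
have ssum_le i : ssum (s i) phi ^+ 2 <= b i ^+ 2.
  rewrite -real_normK ?num_real // lerXn2r ?nnegrE ?normr_ge0 //.
  rewrite (ssumE _ r_uniq supp_r); apply: le_trans (ler_norm_sum _ _ _) _.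
  by apply: ler_sum => a _; case: ifP => _; rewrite ?normr0.
apply: le_trans (ler_sum _ (fun i _ => ssum_le i)) _.
apply: le_trans (sum_sqr_le_sqr_sum b_ge0) _.
rewrite lerXn2r ?nnegrE ?sumr_ge0 //.
rewrite /b exchange_big /=; apply: ler_sum => a _.
have [[i ai]|a_out] := pselect (exists i, a \in (s i : set {classic Gamma})).
  rewrite (bigD1 i) //= ai big1 ?addr0 // => j ji; case: ifP => // aj.
  have : (s i `&` s j) a by split; apply/set_mem.
  by rewrite s_disj // eq_sym.
by rewrite big1 ?normr_ge0 // => i _; case: ifP => // ai; case: a_out; exists i.
Qed.

Definition disj_sqsums phi : set R := [set x | exists n (s : 'I_n -> set Gamma),
  disj_family S s /\ x = \sum_(i < n) ssum (s i) phi ^+ 2].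

Lemma JSnormE phi : JSnorm S phi = Num.sqrt (sup (disj_sqsums phi)).
Proof. by []. Qed.

Lemma disj_family0 : disj_family S (fun i : 'I_0 => set0).
Proof. by split; case. Qed.

Lemma disj_sqsums0 phi : disj_sqsums phi 0.
Proof. by exists 0%N, (fun=> set0); rewrite big_ord0; split => //; exact: disj_family0. Qed.

Lemma disj_sqsums_has_sup phi : has_sup (disj_sqsums phi).
Proof.
split; first by exists 0; exact: disj_sqsums0.
have [r r_uniq supp_r] := supp_seqP phi.
exists ((\sum_(a <- r) `|sval phi a|) ^+ 2) => _ [n [s [[_ s_disj] ->]]].
exact: sum_sqr_ssum_le.
Qed.

Lemma sqrt_sum_sqr_ssum_le_JSnorm phi n (s : 'I_n -> set Gamma) : disj_family S s ->
  Num.sqrt (\sum_i ssum (s i) phi ^+ 2) <= JSnorm S phi.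
Proof.
move=> s_disj; rewrite JSnormE ler_sqrt; last first.
  exact: le_trans (sup_upper_bound (disj_sqsums_has_sup phi) (disj_sqsums0 phi)).
by apply: sup_upper_bound; [exact: disj_sqsums_has_sup | exists n, s].
Qed.

Lemma Dset0 : D (fun=> 0).
Proof.
exists 0%N, (fun=> 0), (fun=> set0); split; first exact: disj_family0.
  by rewrite big_ord0.
by apply: funext => phi; rewrite big_ord0.
Qed.

Lemma Dset_sub_dual_ball : D `<=` ball.
Proof.
move=> _ [n [lam [s [s_disj lam_le1 ->]]]]; split.
  move=> c phi psi chi chiE; rewrite mulr_sumr -big_split /=; apply: eq_bigr => i _.
  by rewrite (sstar_lin_functional (s i) chiE); ring.
move=> phi; apply: le_trans (ler_norm_sum_mul_sqrt _ lam_le1) _.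
exact: sqrt_sum_sqr_ssum_le_JSnorm.
Qed.

Lemma JSnorm_le_sup_Dset psi beta :
  (forall d, D d -> d psi <= beta) -> JSnorm S psi <= beta.
Proof.
move=> D_le.
have beta_ge0 : 0 <= beta := D_le _ Dset0.
rewrite JSnormE -(ger0_norm beta_ge0) -sqrtr_sqr ler_sqrt ?sqr_ge0 //.
apply: ge_sup; first by exists 0; exact: disj_sqsums0.
move=> _ [n [s [s_disj ->]]]; set y := \sum_(i < n) _.
have y_ge0 : 0 <= y by apply: sumr_ge0 => i _; exact: sqr_ge0.
have [->|y_neq0] := eqVneq y 0; first exact: sqr_ge0.
set t := Num.sqrt y.
have t_gt0 : 0 < t by rewrite sqrtr_gt0 lt_def y_neq0 y_ge0.
pose lam i := ssum (s i) psi / t.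
have : \sum_(i < n) lam i * sstar (s i) psi <= beta.
  apply: (D_le (fun phi => \sum_(i < n) lam i * sstar (s i) phi)); exists n, lam, s; split => //.
  rewrite /lam; under eq_bigr do rewrite expr_div_n.
  by rewrite -mulr_suml -/y -(sqr_sqrtr y_ge0) -/t divff // sqrf_eq0 gt_eqF.
have -> : \sum_(i < n) lam i * sstar (s i) psi = t.
  rewrite /lam /sstar; under eq_bigr do rewrite mulrAC -expr2.
  by rewrite -mulr_suml -/y -{1}(sqr_sqrtr y_ge0) -/t expr2 mulfK // gt_eqF.
by move=> t_le; rewrite -(sqr_sqrtr y_ge0) -/t lerXn2r ?nnegrE // ltW.
Qed.

Lemma lin_functional_closed : closed [set g : {ptws X -> R} | lin_functional g].
Proof.
have -> : [set g : {ptws X -> R} | lin_functional g] =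
    \bigcap_(i in [set i : R * X * X * X |
               forall a, sval i.2 a = i.1.1.1 * sval i.1.1.2 a + sval i.1.2 a])
      [set g | g i.2 - (i.1.1.1 * g i.1.1.2 + g i.1.2) = 0].
  apply/seteqP; split=> g g_lin.
    by move=> [[[c phi] psi] chi] /= chiE; rewrite (g_lin c phi psi chi chiE) subrr.
  move=> c phi psi chi chiE; apply/eqP; rewrite -subr_eq0.
  exact/eqP/(g_lin (c, phi, psi, chi)).
apply: closed_bigI => -[[[c phi] psi] chi] _ /=.
apply: (continuous_closedP _).1 (@closed_eq R 0) => g.
exact: (cvgB (@ptws_eval_continuous R X chi g) (cvgD (cvgM (cvg_cst c)
  (@ptws_eval_continuous R X phi g)) (@ptws_eval_continuous R X psi g))).
Qed.

Lemma dual_ball_compact : compact (ball : set {ptws X -> R}).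
Proof.
have box : compact [set g : {ptws X -> R} | forall phi, `|g phi| <= JSnorm S phi].
  have -> : [set g : {ptws X -> R} | forall phi, `|g phi| <= JSnorm S phi] =
      [set g | forall phi : {classic X}, `[- JSnorm S phi, JSnorm S phi]%classic (g phi)].
    by apply/seteqP; split=> g g_le phi; have := g_le phi; rewrite /= in_itv /= ler_norml.
  exact: (@tychonoff {classic X} (fun=> R)
    (fun phi => `[- JSnorm S phi, JSnorm S phi]%classic) (fun phi => @segment_compact R _ _)).
rewrite -[ball]/([set g | lin_functional g] `&` _) setIC.
exact: compact_closedI box lin_functional_closed.
Qed.

Lemma dual_ball_conv : conv_closed ball.
Proof.
move=> J t k t_ge0 t_sum1 k_ball; split.
  move=> c phi psi chi chiE; rewrite mulr_sumr -big_split /=.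
  by apply: eq_bigr => j _; rewrite ((k_ball j).1 c phi psi chi chiE) mulrDr mulrCA.
move=> phi; apply: le_trans (ler_norm_sum _ _ _) _.
rewrite -[JSnorm S phi]mul1r -t_sum1 mulr_suml; apply: ler_sum => j _.
by rewrite normrM ger0_norm // ler_wpM2l // (k_ball j).2.
Qed.

Lemma lincomb_finite (L : seq {classic X}) (a : X -> R) :
  finite_set [set g : Gamma | \sum_(x <- L) a x * sval x g != 0].
Proof.
elim: L => [|x L IH].
  by apply: (sub_finite_set _ (@finite_set0 Gamma)) => g /=; rewrite big_nil eqxx.
have fin_xL : finite_set ([set g | sval x g != 0] `|`
    [set g | \sum_(y <- L) a y * sval y g != 0]).
  by rewrite finite_setU; split => //; exact: (proj2_sig x).
apply: (sub_finite_set _ fin_xL) => g /=.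
rewrite big_cons; have [->|] := eqVneq (sval x g) 0; last by left.
by rewrite mulr0 add0r; right.
Qed.

Definition lincomb (L : seq {classic X}) (a : X -> R) : X :=
  exist _ (fun g => \sum_(x <- L) a x * sval x g) (lincomb_finite L a).

Lemma lin_functional_lincomb f L a :
  lin_functional f -> f (lincomb L a) = \sum_(x <- L) a x * f x.
Proof.
move=> f_lin; elim: L => [|x L IH].
  have z0 g : sval (lincomb [::] a) g =
      1 * sval (lincomb [::] a) g + sval (lincomb [::] a) g.
    by rewrite /= big_nil mul1r addr0.
  by have := f_lin _ _ _ _ z0; rewrite big_nil mul1r; lra.
by rewrite big_cons -IH; apply: f_lin => g; rewrite /= big_cons.
Qed.

Lemma dual_ball_sub_hull f (L : seq {classic X}) (a : X -> R) beta : ball f ->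
  (forall d, D d -> \sum_(x <- L) a x * d x <= beta) -> \sum_(x <- L) a x * f x <= beta.
Proof.
move=> [f_lin f_le] D_le; rewrite -lin_functional_lincomb //.
apply: le_trans (ler_norm _) (le_trans (f_le _) _); apply: JSnorm_le_sup_Dset => d Dd.
by rewrite lin_functional_lincomb ?D_le //; case: (Dset_sub_dual_ball Dd).
Qed.

End james_space.

Theorem lemma2p3 (R : realType) (Gamma : Type) (S : set (set Gamma)) :
  (exists g : Gamma, True) ->
  (forall a : Gamma, S [set a]) ->
  extreme_point (@dual_ball R Gamma S) `<=` wstar_closure (@Dset R Gamma S).
Proof.
move=> _ _; apply: extreme_point_sub_closure.
- exact: dual_ball_compact.
- exact: dual_ball_conv.
- exact: Dset_sub_dual_ball.
- exact: dual_ball_sub_hull.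
Qed.
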